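(* Let $\gamma_\xi=(\{a,b,c\},\emptyset,\emptyset,\{(b,a,c)\})$ be the GES on three distinct events with no conflicts, no initial causes, and where the occurrence of $a$ adds $b$ as a cause of $c$. Then there is no extended bundle event structure (EBES) $\xi$ with $\mathrm{Traces}(\xi)=\mathrm{Traces}(\gamma_\xi)$.
   Context: GES: $\gamma=(E,\#,\to,\lhd)$ with $\#\subseteq E^2$ irreflexive symmetric, $\to\subseteq E^2$, $\lhd\subseteq E^3$ where $(c,m,t)\in\lhd$ means ''$m$ adds $c$ as a cause of $t$'', requiring $\neg(c\to t)$. $\mathrm{ic}(e)=\{e'\mid e'\to e\}$, $\mathrm{ac}(H,e)=\{e'\mid\exists a\in H.(e',a,e)\in\lhd\}$. For $t=e_1\cdots e_n$, $\overline{t_k}=\{e_1,\ldots,e_k\}$. GES traces: finite sequences of pairwise distinct events, pairwise not in conflict, with $\mathrm{ic}(e_i)\cup\mathrm{ac}(\overline{t_{i-1}},e_i)\subseteq\overline{t_{i-1}}$ for all $i$. EBES: $\xi=(E,\rightsquigarrow,\mapsto)$ with disabling relation $\rightsquigarrow\subseteq E^2$ and bundle relation $\mapsto\subseteq 2^E\times E$, satisfying stability: $X\mapsto e$ implies $e_1\rightsquigarrow e_2$ for all distinct $e_1,e_2\in X$. A trace of $\xi$ is a finite sequence $e_1\cdots e_n$ of pairwise distinct events of $E$ such that for all $i$: $X\mapsto e_i$ implies $X\cap\overline{t_{i-1}}\neq\emptyset$, and for all $j<i$: $\neg(e_i\rightsquigarrow e_j)$ (i.e. $x\rightsquigarrow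 y$ means $y$ never precedes $x$). *)

From Stdlib Require Import List.
Import ListNotations.
Set Implicit Arguments.

Record GES (T : Type) := {
  ges_E : T -> Prop;
  ges_conf : T -> T -> Prop;
  ges_caus : T -> T -> Prop;          (* -> : ges_caus e' e  means e' -> e *)
  ges_add : T -> T -> T -> Prop       (* (c,m,t) : m adds c as a cause of t *)
}.

Definition ges_wf T (g : GES T) : Prop :=
  (forall x y, ges_conf g x y -> ges_E g x /\ ges_E g y) /\
  (forall x, ~ ges_conf g x x) /\
  (forall x y, ges_conf g x y -> ges_conf g y x) /\
  (forall x y, ges_caus g x y -> ges_E g x /\ ges_E g y) /\
  (forall c m t, ges_add g c m t -> ges_E g c /\ ges_E g m /\ ges_E g t) /\
  (forall c m t, ges_add g c m t -> ~ ges_caus g c t).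

Definition ic T (g : GES T) (e : T) : T -> Prop := fun e' => ges_caus g e' e.
Definition ac T (g : GES T) (H : list T) (e : T) : T -> Prop :=
  fun e' => exists a, In a H /\ ges_add g e' a e.

Definition ges_trace T (g : GES T) (t : list T) : Prop :=
  NoDup t /\
  (forall e, In e t -> ges_E g e) /\
  (forall e e', In e t -> In e' t -> ~ ges_conf g e e') /\
  (forall pre e post, t = pre ++ e :: post ->
     forall e', (ic g e e' \/ ac g pre e e') -> In e' pre).

Record EBES (T : Type) := {
  ebes_E : T -> Prop;
  ebes_dis : T -> T -> Prop;
  ebes_bundle : (T -> Prop) -> T -> Prop
}.

Definition ebes_wf T (x : EBES T) : Prop :=
  (forall e1 e2, ebes_dis x e1 e2 -> ebes_E x e1 /\ ebes_E x e2) /\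
  (forall X e, ebes_bundle x X e -> ebes_E x e /\ forall y, X y -> ebes_E x y) /\
  (forall X e, ebes_bundle x X e ->
     forall e1 e2, X e1 -> X e2 -> e1 <> e2 -> ebes_dis x e1 e2).

Definition ebes_trace T (x : EBES T) (t : list T) : Prop :=
  NoDup t /\
  (forall e, In e t -> ebes_E x e) /\
  (forall pre e post, t = pre ++ e :: post ->
     (forall X, ebes_bundle x X e -> exists y, In y pre /\ X y) /\
     (forall y, In y pre -> ~ ebes_dis x e y)).

Definition gamma_xi T (a b c : T) : GES T := {|
  ges_E := fun e => e = a \/ e = b \/ e = c;
  ges_conf := fun _ _ => False;
  ges_caus := fun _ _ => False;
  ges_add := fun c' m t => c' = b /\ m = a /\ t = c
|}.

(* In an EBES, whether an event may occur depends only on the events that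
   precede it, not on their order: bundles only ask that some member has
   occurred, and disabling only forbids specific earlier events.  Since [c]
   alone is a trace, c has no bundle; since a may precede c (in a b c), c
   does not disable a.  Hence a c would be a trace of any EBES with the
   traces of gamma_xi, whereas in gamma_xi the occurrence of a makes b a
   cause of c. *)
From Stdlib Require Import List.
Import ListNotations.
Set Implicit Arguments.

Lemma ges_trace_singleton T (g : GES T) (e : T) :
  ges_E g e -> ~ ges_conf g e e -> (forall e', ~ ges_caus g e' e) ->
  ges_trace g [e].
Proof.
  intros HE Hconf Hcaus. repeat split.
  - constructor; [intros []|constructor].
  - intros x [<-|[]]. exact HE.
  - intros x y [<-|[]] [<-|[]]. exact Hconf.
  - intros pre x post Hp e' [Hic|[m [Hm _]]].
    + destruct pre as [|y [|z pre]]; simpl in Hp; injection Hp.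
      * intros _ <-. destruct (Hcaus _ Hic).
      * discriminate.
      * discriminate.
    + destruct pre as [|y [|z pre]]; [destruct Hm| |]; discriminate.
Qed.

Lemma ges_trace_added_cause T (g : GES T) (pre post : list T) (e m c : T) :
  ges_trace g (pre ++ e :: post) -> In m pre -> ges_add g c m e -> In c pre.
Proof.
  intros [_ [_ [_ Hcauses]]] Hm Hadd.
  apply (Hcauses pre e post eq_refl). right. now exists m.
Qed.

Lemma ebes_trace_no_bundle_of_singleton T (xi : EBES T) (e : T) :
  ebes_trace xi [e] -> forall X, ~ ebes_bundle xi X e.
Proof.
  intros [_ [_ Hpos]] X HX.
  destruct (proj1 (Hpos [] e [] eq_refl) X HX) as [y [[] _]].
Qed.

Lemma ebes_trace_not_dis T (xi : EBES T) (pre post : list T) (e y : T) :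
  ebes_trace xi (pre ++ e :: post) -> In y pre -> ~ ebes_dis xi e y.
Proof.
  intros [_ [_ Hpos]]. exact (proj2 (Hpos pre e post eq_refl) y).
Qed.

Lemma ebes_trace_pair T (xi : EBES T) (e1 e2 : T) :
  e1 <> e2 -> ebes_trace xi [e1] -> ebes_trace xi [e2] ->
  ~ ebes_dis xi e2 e1 -> ebes_trace xi [e1; e2].
Proof.
  intros Hne Ht1 Ht2 Hdis.
  pose proof Ht1 as [_ [HE1 Hpos1]].
  pose proof Ht2 as [_ [HE2 _]].
  split; [|split].
  - constructor; [intros [<-|[]]; now apply Hne|].
    constructor; [intros []|constructor].
  - intros x [<-|[<-|[]]]; [apply HE1|apply HE2]; now left.
  - intros pre e post Hp.
    destruct pre as [|y [|z pre]]; simpl in Hp; injection Hp.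
    + intros _ <-. exact (Hpos1 [] e1 [] eq_refl).
    + intros _ <- <-. split.
      * intros X HX. destruct (ebes_trace_no_bundle_of_singleton Ht2 _ HX).
      * intros y [<-|[]]. exact Hdis.
    + intros Hnil _ _. destruct pre; discriminate Hnil.
Qed.

Section GammaXi.

Variables (T : Type) (a b c : T).
Hypotheses (Hab : a <> b) (Hbc : b <> c) (Hac : a <> c).

Lemma gamma_xi_trace_singleton (e : T) :
  e = a \/ e = b \/ e = c -> ges_trace (gamma_xi a b c) [e].
Proof.
  intros He. apply ges_trace_singleton; [exact He|intros []|intros e' []].
Qed.

Lemma gamma_xi_trace_abc : ges_trace (gamma_xi a b c) [a; b; c].
Proof.
  repeat split.
  - repeat constructor; simpl; intuition congruence.
  - intros e [<-|[<-|[<-|[]]]]; simpl; auto.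
  - intros e e' _ _ [].
  - intros pre e post Hp e' [[]|[m [Hm [-> [-> ->]]]]].
    destruct pre as [|x [|y [|z pre]]]; simpl in Hp |- *; injection Hp;
      intros; subst; try destruct Hm; try congruence; auto.
Qed.

Lemma gamma_xi_not_trace_ac : ~ ges_trace (gamma_xi a b c) [a; c].
Proof.
  intros Ht.
  assert (Hb : In b [a]).
  { apply (ges_trace_added_cause [a] [] c a b Ht); simpl; auto. }
  destruct Hb as [Hba|[]]. now apply Hab.
Qed.

End GammaXi.

Theorem lemma12 (T : Type) (a b c : T) :
  a <> b -> b <> c -> a <> c ->
  ~ exists xi : EBES T,
      ebes_wf xi /\
      (forall t : list T, ebes_trace xi t <-> ges_trace (gamma_xi a b c) t).
Proof.
  intros Hab Hbc Hac [xi [_ Htraces]].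
  assert (Ha : ebes_trace xi [a])
    by (apply Htraces, gamma_xi_trace_singleton; auto).
  assert (Hc : ebes_trace xi [c])
    by (apply Htraces, gamma_xi_trace_singleton; auto).
  assert (Hdis : ~ ebes_dis xi c a).
  { apply (ebes_trace_not_dis [a; b] [] c a); [|now left].
    now apply Htraces, gamma_xi_trace_abc. }
  apply (gamma_xi_not_trace_ac (c := c) Hab), Htraces.
  now apply ebes_trace_pair.
Qed.
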